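(* Let $(\Omega,\mathcal G,\alpha)$ be a dynamical system. The following are equivalent: (i) $(\Omega,\mathcal G,\alpha)$ is minimal; (ii) $\Omega=\Omega_{\mathrm{PE}}$; (iii) $\Omega_{\mathrm{PE}}$ is closed and non-empty.
   Context: $(\mathcal G,+)$ is a countably infinite discrete group (written additively, not necessarily abelian). A dynamical system $(\Omega,\mathcal G,\alpha)$ consists of a compact metric space $\Omega$ and a map $\alpha$ from $\mathcal G$ to the homeomorphisms of $\Omega$ with $\alpha(g+h)=\alpha(g)\circ\alpha(h)$. It is minimal if every orbit $\{\alpha(g)(\omega):g\in\mathcal G\}$ is dense in $\Omega$. A sequence $(g_n)$ satisfies $g_n\to\infty$ if it eventually leaves every finite subset of $\mathcal G$. $L(\omega)=\{\nu\in\Omega:\exists (g_n),\ g_n\to\infty,\ \alpha(g_n)(\omega)\to\nu\}$; $\omega$ is pseudoergodic if $L(\omega)=\Omega$, and $\Omega_{\mathrm{PE}}$ denotes the set of pseudoergodic elements. *)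

From HB Require Import structures.
From mathcomp Require Import all_boot all_order all_algebra.
From mathcomp Require Import all_classical all_reals all_analysis.
Set Implicit Arguments. Unset Strict Implicit. Unset Printing Implicit Defensive.
Import Order.TTheory GRing.Theory Num.Theory.
Local Open Scope classical_set_scope.

Record is_group (G : Type) (add : G -> G -> G) (zero : G) (opp : G -> G) : Prop := {
  grp_addA : forall x y z, add x (add y z) = add (add x y) z;
  grp_add0g : forall x, add zero x = x;
  grp_addg0 : forall x, add x zero = x;
  grp_addNg : forall x, add (opp x) x = zero;
  grp_addgN : forall x, add x (opp x) = zero }.

Definition countably_infinite (G : Type) : Prop :=
  countable [set: G] /\ infinite_set [set: G].

Definition homeomorphism (T : topologicalType) (f : T -> T) : Prop :=
  continuous f /\ exists g : T -> T, [/\ cancel f g, cancel g f & continuous g].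

Definition dynamical_system (G : Type) (add : G -> G -> G) (T : topologicalType)
  (alpha : G -> T -> T) : Prop :=
  (forall g, homeomorphism (alpha g)) /\
  (forall g h, alpha (add g h) = alpha g \o alpha h).

Definition tends_to_infinity (G : Type) (gs : nat -> G) : Prop :=
  forall F : set G, finite_set F -> exists N, forall n, (N <= n)%N -> ~ F (gs n).

Definition orbit (G : Type) (T : Type) (alpha : G -> T -> T) (w : T) : set T :=
  [set alpha g w | g in [set: G]].

Definition minimal (G : Type) (T : topologicalType) (alpha : G -> T -> T) : Prop :=
  forall w : T, closure (orbit alpha w) = [set: T].

Definition limit_set (G : Type) (T : topologicalType) (alpha : G -> T -> T) (w : T)
  : set T :=
  [set nu | exists gs : nat -> G, tends_to_infinity gs /\
            (fun n => alpha (gs n) w) @ \oo --> nu].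

Definition pseudoergodic (G : Type) (T : topologicalType) (alpha : G -> T -> T)
  (w : T) : Prop := limit_set alpha w = [set: T].

Definition Omega_PE (G : Type) (T : topologicalType) (alpha : G -> T -> T) : set T :=
  [set w | pseudoergodic alpha w].

From Pilot Require Import Defs.
From HB Require Import structures.
From mathcomp Require Import all_boot all_order all_algebra.
From mathcomp Require Import all_classical all_reals all_analysis.
Set Implicit Arguments. Unset Strict Implicit. Unset Printing Implicit Defensive.
Local Open Scope classical_set_scope.

Import Order.TTheory GRing.Theory Num.Theory.

(* For minimality => pseudoergodicity it suffices that every neighbourhood
   [N] of every point [nu] is visited by infinitely many [alpha g w]: then
   the countability of the group lets one pick visits to the balls of radius
   [1/(n+1)] that eventually leave every finite set.  If some [N] were
   visited only finitely often, density of the orbit of [w] in the T1 space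
   [Omega] would force [nu] to be isolated; by minimality every point is
   mapped onto [nu] by a homeomorphism, so [Omega] is discrete, hence finite
   by compactness; the group would then be finite, being covered by the
   elements [-h_y + f] with [alpha h_y y = nu] and [f] visiting [N].
   Conversely the pseudoergodic points form an invariant set, and the limit
   set of a point lies in the closure of its orbit, so a closed nonempty
   [Omega_PE] is everything and every orbit is dense. *)

Lemma finite_set_nat_bounded {S : set nat} : finite_set S -> exists M, S `<=` `I_M.
Proof.
move=> /finite_seqP[s ->]; exists (\max_(i <- s) i).+1 => i si.
by rewrite /= ltnS; apply: (leq_bigmax_seq (F := id)).
Qed.

Lemma compact_set1_open_finite (T : topologicalType) :
  compact [set: T] -> (forall x : T, open [set x]) -> finite_set [set: T].
Proof.
move=> cT set1_open; apply: contrapT => /frechet_properfilter PF.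
have [|p [_ clp]] := cT _ PF.
  by rewrite /frechet_filter /= setCT; exact: finite_set0.
have [x [x_neq_p x_eq_p]] : ~` [set p] `&` [set p] !=set0.
  apply: clp; first by rewrite /frechet_filter /= setCK; exact: finite_set1.
  exact: open_nbhs_nbhs.
exact: x_neq_p.
Qed.

Lemma tends_to_infinity_index (G : Type) (fi : G -> nat) (gs : nat -> G) :
  (forall n, (n <= fi (gs n))%N) -> tends_to_infinity gs.
Proof.
move=> gs_ge F finF.
have [M fiF_lt] := finite_set_nat_bounded (finite_image fi finF).
exists M => n Mn Fn.
have : (fi (gs n) < M)%N by apply: fiF_lt; exists (gs n).
by rewrite ltnNge (leq_trans Mn (gs_ge n)).
Qed.

Section Orbits.
Variables (G : Type) (T : topologicalType) (alpha : G -> T -> T).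

Lemma limit_set_sub_closure_orbit w :
  limit_set alpha w `<=` closure (Defs.orbit alpha w).
Proof.
move=> nu [gs [_ gs_cvg]]; apply: (closed_cvg _ (@closed_closure _ _) _ _ gs_cvg).
by apply: nearW => n; apply: subset_closure; exists (gs n).
Qed.

Lemma pseudoergodic_orbit_dense w :
  pseudoergodic alpha w -> closure (Defs.orbit alpha w) = [set: T].
Proof.
move=> PEw; apply/seteqP; split=> // nu _.
by apply: limit_set_sub_closure_orbit; rewrite PEw.
Qed.

Lemma finitely_visited_set1_open w (nu : T) (N : set T) : accessible_space T ->
  closure (Defs.orbit alpha w) = [set: T] -> nbhs nu N ->
  finite_set [set g | N (alpha g w)] -> open [set nu].
Proof.
move=> T1 orbit_dense Nnu finF.
set V := [set alpha g w | g in [set g | N (alpha g w)]] `\ nu.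
have V_closed : closed V.
  by move/accessible_finite_set_closed: T1; apply; apply/finite_setD/finite_image.
have : nbhs nu (N `&` ~` V).
  apply: filterI => //; apply: open_nbhs_nbhs; split.
    exact: closed_openC.
  by move=> [_ /(_ erefl)].
rewrite nbhsE => -[U [U_open Unu] UNV].
suff -> : [set nu] = U by [].
apply/seteqP; split=> [z -> //|z Uz]; apply: contrapT => z_neq_nu.
have : nbhs z (U `&` ~` [set nu]).
  apply: open_nbhs_nbhs; split; last by split.
  by apply: openI => //; apply/closed_openC/accessible_closed_set1.
have : closure (Defs.orbit alpha w) z by rewrite orbit_dense.
move=> /[apply] -[_ [[g _ <-] [/UNV[Ngw notVgw] gw_neq_nu]]].
by apply: notVgw; split=> //; exists g.
Qed.

Lemma minimal_set1_open_reached (nu : T) : minimal alpha -> open [set nu] ->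
  forall y, exists g, alpha g y = nu.
Proof.
move=> hmin nu_open y.
have : closure (Defs.orbit alpha y) nu by rewrite hmin.
move=> /(_ [set nu] (open_nbhs_nbhs (conj nu_open erefl))).
by move=> [_ [[g _ <-] gy_nu]]; exists g.
Qed.

Lemma Omega_PE_setT_minimal : Omega_PE alpha = [set: T] -> minimal alpha.
Proof.
move=> PE_setT x; apply: pseudoergodic_orbit_dense.
by change (Omega_PE alpha x); rewrite PE_setT.
Qed.

End Orbits.

Section GroupAction.
Variables (G : Type) (add : G -> G -> G) (zero : G) (opp : G -> G)
  (T : topologicalType) (alpha : G -> T -> T).
Hypotheses (G_group : is_group add zero opp) (alpha_ds : dynamical_system add alpha).

Lemma action_inj g : injective (alpha g).
Proof. by have [/(_ g)[_ [h [alphaK _ _]]] _] := alpha_ds; exact: can_inj alphaK. Qed.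

Lemma actionD g h x : alpha (add g h) x = alpha g (alpha h x).
Proof. by have [_ ->] := alpha_ds. Qed.

Lemma action0 x : alpha zero x = x.
Proof.
by apply: (@action_inj zero); rewrite -actionD (grp_add0g G_group).
Qed.

Lemma actionNK h x : alpha (opp h) (alpha h x) = x.
Proof. by rewrite -actionD (grp_addNg G_group) action0. Qed.

Lemma pseudoergodic_action h w :
  pseudoergodic alpha w -> pseudoergodic alpha (alpha h w).
Proof.
move=> PEw; apply/seteqP; split=> // nu _.
have [gs [gs_oo gs_cvg]] : limit_set alpha w nu by rewrite PEw.
exists (fun n => add (gs n) (opp h)); split.
  move=> F finF; have [N gsN] := gs_oo _ (finite_image (add^~ h) finF).
  exists N => n Nn Fn; apply: (gsN n Nn); exists (add (gs n) (opp h)) => //.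
  by rewrite -(grp_addA G_group) (grp_addNg G_group) (grp_addg0 G_group).
by under eq_fun do rewrite actionD actionNK.
Qed.

Lemma Omega_PE_closed_setT w : closed (Omega_PE alpha) ->
  Omega_PE alpha w -> Omega_PE alpha = [set: T].
Proof.
move=> PE_closed PEw; apply/seteqP; split=> // y _.
have orbit_PE : Defs.orbit alpha w `<=` Omega_PE alpha.
  by move=> _ [g _ <-]; exact: pseudoergodic_action.
rewrite ((closure_id _).1 PE_closed); apply: (closureS orbit_PE).
by rewrite pseudoergodic_orbit_dense.
Qed.

Lemma minimal_set1_open (nu : T) : minimal alpha -> open [set nu] ->
  forall y : T, open [set y].
Proof.
move=> hmin nu_open y; have [g gy_nu] := minimal_set1_open_reached hmin nu_open y.
suff -> : [set y] = alpha g @^-1` [set nu].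
  by apply: open_comp => // x _; have [/(_ g)[]] := alpha_ds.
apply/seteqP; split=> x /=; first by move=> ->.
by rewrite -gy_nu => /action_inj.
Qed.

Lemma finitely_visited_finite_group w (nu : T) (N : set T) :
  finite_set [set: T] -> (forall y, exists g, alpha g y = nu) -> N nu ->
  finite_set [set g | N (alpha g w)] -> finite_set [set: G].
Proof.
move=> finT reach Nnu finF; have [h hP] := choice reach.
apply: sub_finite_set (finite_image2 (fun y g => add (opp (h y)) g) finT finF).
move=> g _; exists (alpha g w) => //; exists (add (h (alpha g w)) g).
  by rewrite /= actionD hP.
by rewrite (grp_addA G_group) (grp_addNg G_group) (grp_add0g G_group).
Qed.

Lemma minimal_infinitely_visited w (nu : T) (N : set T) :
  accessible_space T -> compact [set: T] -> minimal alpha ->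
  infinite_set [set: G] -> nbhs nu N -> infinite_set [set g | N (alpha g w)].
Proof.
move=> T1 T_compact hmin G_infinite Nnu finF; apply: G_infinite.
have nu_open := finitely_visited_set1_open T1 (hmin w) Nnu finF.
apply: finitely_visited_finite_group (minimal_set1_open_reached hmin nu_open)
  (nbhs_singleton Nnu) finF.
exact: compact_set1_open_finite T_compact (minimal_set1_open hmin nu_open).
Qed.

End GroupAction.

Lemma infinitely_visited_limit_set (G : Type) (R : realType) (T : metricType R)
    (alpha : G -> T -> T) (w nu : T) :
  countable [set: G] ->
  (forall N, nbhs nu N -> infinite_set [set g | N (alpha g w)]) ->
  limit_set alpha w nu.
Proof.
move=> /countable_injP[fi fi_inj] visits.
have visit n : exists g, ball nu (n.+1%:R^-1)%R (alpha g w) /\ (n <= fi g)%N.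
  apply: contrapT => no_visit.
  have n_pos : (0 < n.+1%:R^-1 :> R)%R by rewrite invr_gt0 ltr0Sn.
  apply: visits (nbhsx_ballx nu _ n_pos) _.
  have fi_small : finite_set (fi @^-1` `I_n).
    by apply: finite_preimage (finite_II n) => x y _ _; apply: fi_inj; rewrite in_setT.
  apply: sub_finite_set fi_small => g /= g_visits.
  by rewrite ltnNge; apply/negP => n_le; apply: no_visit; exists g.
have [gs gsP] := choice visit.
exists gs; split; first exact: tends_to_infinity_index (fun n => (gsP n).2).
apply/cvg_ballP => e e_pos; near=> n.
apply: (@le_ball _ _ _ (n.+1%:R^-1)%R); last exact: (gsP n).1.
apply/ltW; near: n; exact: (near_infty_natSinv_lt (PosNum e_pos)).
Unshelve. all: end_near.
Qed.

Theorem proposition3p6 (G : Type) (add : G -> G -> G) (zero : G) (opp : G -> G)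
  (R : realType) (Omega : metricType R) (alpha : G -> Omega -> Omega) :
  is_group add zero opp ->
  countably_infinite G ->
  compact [set: Omega] ->
  [set: Omega] !=set0 ->
  dynamical_system add alpha ->
  [<-> minimal alpha;
       Omega_PE alpha = [set: Omega];
       closed (Omega_PE alpha) /\ Omega_PE alpha !=set0].
Proof.
move=> G_group [G_countable G_infinite] Omega_compact Omega_nonempty alpha_ds.
have Omega_T1 : accessible_space Omega.
  exact/hausdorff_accessible/metric_hausdorff.
tfae=> [hmin | PE_setT | [PE_closed [w PEw]]].
- apply/seteqP; split=> // w _; apply/seteqP; split=> // nu _.
  apply: infinitely_visited_limit_set G_countable _ => N Nnu.
  exact: (minimal_infinitely_visited (w := w) G_group alpha_ds Omega_T1
    Omega_compact hmin G_infinite Nnu).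
- by rewrite PE_setT; split; [exact: closedT | exact: Omega_nonempty].
- exact/Omega_PE_setT_minimal/(Omega_PE_closed_setT G_group alpha_ds PE_closed PEw).
Qed.
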